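(* For every $m\in\mathbb N_+$, $k\ge1$, $\xi\in\mathbb R^d$ and every configuration $\mathbf a$, $$\sum_{F\subset E_d(\square_m),|F|=k}D_F\mathscr E_{m,\xi}(\mathbf a)=\frac1{|\square_m|}\Big\langle\nabla\ell_\xi,\ \mathbf a\sum_{F\subset E_d(\square_m),|F|=k}(D_F\nabla v_{m,\xi})(\mathbf a)\Big\rangle_{\square_m}+\frac1{|\square_m|}\sum_{e\in E_d(\square_m)}\Big\langle\nabla\ell_\xi,\ (\mathbf a^e-\mathbf a)\sum_{G\subset E_d(\square_m),|G|=k-1}(D_G\nabla v_{m,\xi})(\mathbf a^e)\Big\rangle_{\square_m}.$$
   Context: Bond configurations $\mathbf a\in\{0,1\}^{E_d}$ on $\mathbb Z^d$. $E_d(U)$: nearest-neighbour edges with both endpoints in $U$; $\partial U=\{x\in U:\exists y\sim x, y\notin U\}$, $\mathrm{int}(U)=U\setminus\partial U$; $\square_m=\mathbb Z^d\cap(-3^m/2,3^m/2)^d$; $\ell_\xi(x)=\xi\cdot x$. For $u:\mathbb Z^d\to\mathbb R$, $\nabla u(x,y)=u(y)-u(x)$ on oriented edges; $\nabla\cdot(\mathbf a\nabla u)(x)=\sum_{z\sim x}\mathbf a(\{x,z\})(u(z)-u(x))$; for vector fields, $\langle F,G\rangle_V=\sum_{e\in E_d(V)}F(e)G(e)$, and $(\mathbf b F)(e)=\mathbf b(e)F(e)$. $\mathscr E_{m,\xi}(\mathbf a)=\inf_{v\in\ell_\xi+C_0(\square_m)}|\square_m|^{-1}\sum_{e\in E_d(\square_m)}\mathbf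 a(e)|\nabla v(e)|^2$, with $C_0(U)$ the functions vanishing on $\partial U$. For each configuration $\mathbf b$, $v_{m,\xi}(\mathbf b)$ is a fixed function on $\square_m$ with $v_{m,\xi}(\mathbf b)=\ell_\xi$ on $\partial\square_m$ and $-\nabla\cdot(\mathbf b\nabla v_{m,\xi}(\mathbf b))=0$ at every $x\in\mathrm{int}(\square_m)$ (such a function exists: harmonic on clusters connected to $\partial\square_m$, constant on the other clusters; it attains the infimum in $\mathscr E_{m,\xi}(\mathbf b)$). $\mathbf a^G(e)=\mathbf 1_{e\in G}+\mathbf a(e)\mathbf 1_{e\notin G}$, $\mathbf a^e=\mathbf a^{\{e\}}$; $D_Gf(\mathbf a)=\sum_{G'\subset G}(-1)^{|G\setminus G'|}f(\mathbf a^{G'})$, and $(D_Gf)(\mathbf a^e)$ means $D_Gf$ evaluated at the configuration $\mathbf a^e$. *)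

From HB Require Import structures.
From mathcomp Require Import all_boot all_order all_algebra.
From mathcomp Require Import boolp classical_sets reals.
Set Implicit Arguments. Unset Strict Implicit. Unset Printing Implicit Defensive.
Import Order.TTheory GRing.Theory Num.Theory.
Local Open Scope ring_scope.
Local Open Scope classical_set_scope.

Definition pt (d : nat) := {ffun 'I_d -> int}.
(* The (unoriented) nearest-neighbour edge {x, x + e_i} is represented by
   (x, i); its canonical orientation is x -> x + e_i. *)
Definition edge (d : nat) := (pt d * 'I_d)%type.
Definition config (d : nat) := edge d -> bool.

Definition shift (d : nat) (x : pt d) (i : 'I_d) (s : int) : pt d :=
  [ffun j => x j + (if j == i then s else 0)].

Definition inbox (d m : nat) (x : pt d) : bool :=
  [forall i, `|2 * x i| < (3 ^ m)%:Z].
Definition bdry (d m : nat) (x : pt d) : bool :=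
  inbox m x && [exists i, ~~ inbox m (shift x i 1) || ~~ inbox m (shift x i (-1))].
Definition interior (d m : nat) (x : pt d) : bool := inbox m x && ~~ bdry m x.

(* Finite enumeration of square_m: raw coordinates in {0,..,3^m-1}, shifted
   by -(3^m-1)/2; emb is a bijection onto the points of square_m. *)
Definition bpt (d m : nat) := {ffun 'I_d -> 'I_(3 ^ m)}.
Definition emb (d m : nat) (x : bpt d m) : pt d :=
  [ffun i => ((x i : nat)%:Z - ((3 ^ m).-1./2)%:Z)%R].
Definition bedge (d m : nat) := (bpt d m * 'I_d)%type.
Definition toE (d m : nat) (e : bedge d m) : edge d := (emb e.1, e.2).
Definition Ebox (d m : nat) : {set bedge d m} :=
  [set e | inbox m (emb e.1) && inbox m (shift (emb e.1) e.2 1)].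
Definition box_card (d m : nat) : nat := #|{: bpt d m}|.

Section Analytic.
Variable R : realType.
Variable d : nat.

Definition grad (u : pt d -> R) (e : edge d) : R := u (shift e.1 e.2 1) - u e.1.

Definition lxi (xi : 'rV[R]_d) (x : pt d) : R := \sum_i xi 0 i * (x i)%:~R.

Definition div_a_grad (a : config d) (u : pt d -> R) (x : pt d) : R :=
  \sum_i ((a (x, i))%:R * (u (shift x i 1) - u x)
          + (a (shift x i (-1), i))%:R * (u (shift x i (-1)) - u x)).

Definition C0 (m : nat) (f : pt d -> R) : Prop := forall x, bdry m x -> f x = 0.

Definition energy_of (m : nat) (a : config d) (v : pt d -> R) : R :=
  (box_card d m)%:R^-1 *
    \sum_(e in Ebox d m) (a (toE e))%:R * (grad v (toE e)) ^+ 2.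

Definition Energy (m : nat) (xi : 'rV[R]_d) (a : config d) : R :=
  inf [set energy_of m a v | v in [set v : pt d -> R | C0 m (fun x => v x - lxi xi x)]].

Definition upd (m : nat) (a : config d) (G : {set bedge d m}) : config d :=
  fun y => [exists e in G, toE e == y] || a y.

Definition DG (m : nat) (G : {set bedge d m}) (f : config d -> R) (a : config d) : R :=
  \sum_(G' : {set bedge d m} | G' \subset G) (-1) ^+ #|G :\: G'| * f (upd a G').

(* v is an admissible choice of v_{m,xi}(.): for each configuration b,
   v b = ell_xi on ∂square_m and -∇·(b ∇ v b) = 0 on int(square_m). *)
Definition is_vsel (m : nat) (xi : 'rV[R]_d) (v : config d -> pt d -> R) : Prop :=
  forall b : config d,
    (forall x, bdry m x -> v b x = lxi xi x) /\
    (forall x, interior m x -> - div_a_grad b (v b) x = 0).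
End Analytic.

From HB Require Import structures.
From mathcomp Require Import all_boot all_order all_algebra.
From mathcomp Require Import boolp classical_sets reals.
From mathcomp Require Import zify ring lra.
Import Order.TTheory GRing.Theory Num.Theory.
Set Implicit Arguments. Unset Strict Implicit. Unset Printing Implicit Defensive.
Local Open Scope ring_scope.

(* Summation by parts against functions of C_0(square_m) shows that v(b), being
   b-harmonic in int(square_m) with boundary values ell_xi, minimises the Dirichlet
   energy and satisfies E_{m,xi}(b) = |square_m|^-1 <grad ell_xi, b grad v(b)>.
   Since D_F is linear, it then suffices to expand D_F of b |-> b(e) grad v(b)(e) for
   each edge e: when a(e) = 1 the factor b(e) is constantly 1 on all a^G, and when
   a(e) = 0 only the sets F containing e contribute, with
   D_F (b(e) g)(a) = D_{F\{e}} g (a^e). *)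

Section BoxGeometry.
Variables (d m : nat).
Let c := ((3 ^ m).-1./2)%N.

Lemma exp3_halfE : (3 ^ m = (c * 2).+1)%N.
Proof.
have := odd_double_half (3 ^ m); rewrite oddX orbT /= => h.
by rewrite /c -{2}h add1n /= doubleK muln2 -{1}h add1n.
Qed.

Lemma inboxE (y : pt d) : inbox m y = [forall j, - c%:Z <= y j <= c%:Z].
Proof.
rewrite /inbox exp3_halfE; apply: eq_forallb => j.
by rewrite ltr_norml; apply/idP/idP => /andP[h1 h2]; apply/andP; split; lia.
Qed.

Lemma inbox_emb (x : bpt d m) : inbox m (emb x).
Proof.
rewrite inboxE; apply/forallP => j; rewrite /emb ffunE -/c.
have : (x j < (c * 2).+1)%N by rewrite -exp3_halfE.
by move=> h; apply/andP; split; lia.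
Qed.

Lemma emb_inj : injective (@emb d m).
Proof.
move=> x y /ffunP h; apply/ffunP => j; have := h j; rewrite /emb !ffunE => e.
by apply: val_inj => /=; lia.
Qed.

Lemma toE_inj : injective (@toE d m).
Proof. by move=> [x i] [y j] [/emb_inj -> ->]. Qed.

Lemma shiftK (y : pt d) i s : shift (shift y i s) i (- s) = y.
Proof. by apply/ffunP => j; rewrite !ffunE; case: eqP; rewrite ?addrK ?addr0. Qed.

Lemma shiftNK (y : pt d) i s : shift (shift y i (- s)) i s = y.
Proof. by rewrite -{2}(opprK s) shiftK. Qed.

(* Successor in direction [i], cyclic in the raw coordinates: the last layer wraps
   around to the first one. *)
Definition bsucc (i : 'I_d) (x : bpt d m) : bpt d m :=
  [ffun j => if j == i then ordS (x j) else x j].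

Lemma bsucc_inj i : injective (bsucc i).
Proof.
move=> x y /ffunP h; apply/ffunP => j; have := h j; rewrite !ffunE.
by case: eqP => // _ /ordS_inj.
Qed.

Lemma emb_bsucc (x : bpt d m) i : ((x i).+1 < 3 ^ m)%N ->
  emb (bsucc i x) = shift (emb x) i 1.
Proof.
move=> h; apply/ffunP => j; rewrite !ffunE; case: eqP => [-> /=|_]; last by rewrite addr0.
by rewrite modn_small //; lia.
Qed.

Lemma mem_Ebox (x : bpt d m) i : ((x, i) \in Ebox d m) = ((x i).+1 < 3 ^ m)%N.
Proof.
rewrite inE /= inbox_emb /=; case: ltnP => h; first by rewrite -emb_bsucc // inbox_emb.
apply/negP; rewrite inboxE => /forallP/(_ i); rewrite !ffunE eqxx -/c.
by have := exp3_halfE; have := ltn_ord (x i); lia.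
Qed.

Lemma bdry_emb_notin_Ebox (x : bpt d m) i : (x, i) \notin Ebox d m -> bdry m (emb x).
Proof.
by rewrite inE /= inbox_emb => h; rewrite /bdry inbox_emb; apply/existsP; exists i; rewrite h.
Qed.

Lemma bdry_emb_bsucc_notin_Ebox (x : bpt d m) i :
  (x, i) \notin Ebox d m -> bdry m (emb (bsucc i x)).
Proof.
rewrite mem_Ebox -leqNgt => h; rewrite /bdry inbox_emb; apply/existsP; exists i.
apply/orP; right; rewrite inboxE negb_forall; apply/existsP; exists i.
have xi_last : (x i).+1 = (3 ^ m)%N by apply/eqP; rewrite eqn_leq h ltn_ord.
rewrite !ffunE eqxx /= xi_last modnn -/c.
by have := exp3_halfE; lia.
Qed.
End BoxGeometry.

Section SummationByParts.
Variables (R : realType) (d m : nat).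

Definition harmonic_in (b : config d) (u : pt d -> R) : Prop :=
  forall x, interior m x -> div_a_grad b u x = 0.

Lemma gradB (f g : pt d -> R) e : grad (fun x => f x - g x) e = grad f e - grad g e.
Proof. by rewrite /grad; ring. Qed.

Variables (b : config d) (u phi : pt d -> R).
Hypotheses (u_harm : harmonic_in b u) (phi_C0 : C0 m phi).
Let current (e : edge d) := (b e)%:R * grad u e.

Lemma div_a_gradE x :
  div_a_grad b u x = \sum_i (current (x, i) - current (shift x i (-1), i)).
Proof. by apply: eq_bigr => i _; rewrite /current /grad /= shiftNK; ring. Qed.

Lemma sum_phi_div_eq0 :
  \sum_(e : bedge d m)
     phi (emb e.1) * (current (toE e) - current (shift (emb e.1) e.2 (-1), e.2)) = 0.
Proof.
rewrite -(pair_bigA _ (fun x i => phi (emb x) *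
            (current (emb x, i) - current (shift (emb x) i (-1), i)))) /=.
apply: big1 => x _; rewrite -big_distrr -div_a_gradE /=.
case hx: (bdry m (emb x)); first by rewrite (phi_C0 hx) mul0r.
by rewrite u_harm ?mulr0 // /interior inbox_emb hx.
Qed.

Lemma sum_current_tail :
  \sum_(e in Ebox d m) current (toE e) * phi (emb e.1)
  = \sum_(e : bedge d m) phi (emb e.1) * current (toE e).
Proof.
rewrite big_mkcond; apply: eq_bigr => -[x i] _ /=.
case: ifPn => [_|/bdry_emb_notin_Ebox hx]; first exact: mulrC.
by rewrite (phi_C0 hx) mul0r.
Qed.

(* Reindex by [bsucc]; the wrapped-around terms vanish because [phi] does on the boundary. *)
Lemma sum_current_head :
  \sum_(e in Ebox d m) current (toE e) * phi (shift (emb e.1) e.2 1)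
  = \sum_(e : bedge d m) phi (emb e.1) * current (shift (emb e.1) e.2 (-1), e.2).
Proof.
have bsucc_edge_inj : injective (fun e : bedge d m => (bsucc e.2 e.1, e.2)).
  by move=> [x i] [y j] [xy ij]; move: xy; rewrite -ij => /bsucc_inj ->.
rewrite [RHS](reindex_inj bsucc_edge_inj) big_mkcond; apply: eq_bigr => -[x i] _ /=.
case: ifPn => [xi_in|/bdry_emb_bsucc_notin_Ebox hx]; last by rewrite (phi_C0 hx) mul0r.
by rewrite emb_bsucc -?mem_Ebox // shiftK mulrC.
Qed.

Lemma harmonic_orthoC0 :
  \sum_(e in Ebox d m) (b (toE e))%:R * grad u (toE e) * grad phi (toE e) = 0.
Proof.
under eq_bigr do rewrite [grad phi _]/grad mulrBr.
rewrite sumrB sum_current_head sum_current_tail -sumrB.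
rewrite -[RHS]oppr0 -[X in _ = - X]sum_phi_div_eq0 -sumrN.
by apply: eq_bigr => e _; ring.
Qed.
End SummationByParts.

Section DirichletPrinciple.
Variables (R : realType) (d m : nat) (b : config d).

Lemma energy_of_harmonicD (u w : pt d -> R) :
  harmonic_in m b u -> C0 m (fun x => w x - u x) ->
  energy_of m b w = energy_of m b u
    + (box_card d m)%:R^-1 *
      \sum_(e in Ebox d m) (b (toE e))%:R * grad (fun x => w x - u x) (toE e) ^+ 2.
Proof.
move=> hu hwu; rewrite /energy_of -mulrDr -big_split /=; congr (_ * _).
suff : \sum_(e in Ebox d m) (b (toE e))%:R * grad w (toE e) ^+ 2
       - \sum_(e in Ebox d m) ((b (toE e))%:R * grad u (toE e) ^+ 2
                               + (b (toE e))%:R * grad (fun x => w x - u x) (toE e) ^+ 2)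
       = 2 * \sum_(e in Ebox d m)
               (b (toE e))%:R * grad u (toE e) * grad (fun x => w x - u x) (toE e).
  by rewrite (harmonic_orthoC0 hu hwu) mulr0 => /eqP; rewrite subr_eq0 => /eqP.
by rewrite -sumrB big_distrr /=; apply: eq_bigr => e _; rewrite gradB; ring.
Qed.

Lemma energy_of_harmonic_le (u w : pt d -> R) :
  harmonic_in m b u -> C0 m (fun x => w x - u x) -> energy_of m b u <= energy_of m b w.
Proof.
move=> hu hwu; rewrite (energy_of_harmonicD hu hwu) lerDl mulr_ge0 ?invr_ge0 ?ler0n //.
by apply: sumr_ge0 => e _; rewrite mulr_ge0 ?ler0n ?sqr_ge0.
Qed.

Lemma Energy_harmonic (xi : 'rV[R]_d) (u : pt d -> R) :
  harmonic_in m b u -> C0 m (fun x => u x - lxi xi x) -> Energy m xi b = energy_of m b u.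
Proof.
move=> hu hu_bd; rewrite /Energy; set S := (X in inf X).
have Su : S (energy_of m b u) by exists u.
have lb_u : lbound S (energy_of m b u).
  move=> _ [w /= hw_bd <-]; apply: energy_of_harmonic_le hu _ => x hx.
  by have := hw_bd x hx; have := hu_bd x hx; lra.
apply/le_anti/andP; split; last exact: lb_le_inf (ex_intro _ _ Su) lb_u.
by apply: ge_inf Su; exists (energy_of m b u).
Qed.

Lemma energy_of_harmonicE (u g : pt d -> R) :
  harmonic_in m b u -> C0 m (fun x => u x - g x) ->
  energy_of m b u = (box_card d m)%:R^-1 *
    \sum_(e in Ebox d m) grad g (toE e) * ((b (toE e))%:R * grad u (toE e)).
Proof.
move=> hu hug; congr (_ * _).
rewrite -[RHS]addr0 -[X in _ = _ + X](harmonic_orthoC0 hu hug) -big_split /=.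
by apply: eq_bigr => e _; rewrite gradB; ring.
Qed.
End DirichletPrinciple.

Lemma Energy_vsel (R : realType) (d m : nat) (xi : 'rV[R]_d)
    (v : config d -> pt d -> R) (b : config d) :
  is_vsel m xi v ->
  Energy m xi b = (box_card d m)%:R^-1 *
    \sum_(e in Ebox d m) grad (lxi xi) (toE e) * ((b (toE e))%:R * grad (v b) (toE e)).
Proof.
move=> /(_ b) [vb_bd vb_harm].
have hu : harmonic_in m b (v b) by move=> x /vb_harm /eqP; rewrite oppr_eq0 => /eqP.
have hC0 : C0 m (fun x => v b x - lxi xi x) by move=> x /vb_bd ->; rewrite subrr.
by rewrite (Energy_harmonic hu hC0) (energy_of_harmonicE hu hC0).
Qed.

Lemma sum_card_set_mem (R : nmodType) (T : finType) (A : {set T}) (x : T) (k : nat)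
    (h : {set T} -> R) :
  x \in A -> (1 <= k)%N ->
  \sum_(F : {set T} | (F \subset A) && (#|F| == k) && (x \in F)) h F
  = \sum_(G : {set T} | (G \subset A) && (#|G| == k.-1) && (x \notin G)) h (x |: G).
Proof.
move=> xA k_gt0.
rewrite (reindex_onto (fun G => x |: G) (fun G => G :\ x)) /=; last first.
  by move=> G /andP[_ h']; rewrite finset.setD1K.
apply: eq_bigl => G; rewrite finset.subUset finset.sub1set xA setU11 cardsU1 !andbT /=.
apply/andP/andP => [[/andP[GA /eqP cardG] /eqP GE]|[/andP[GA /eqP cardG] xG]].
  have xG : x \notin G by rewrite -GE setD11.
  by rewrite GA xG; split=> //; apply/eqP; move: cardG; rewrite xG /=; lia.
by split; [rewrite GA xG cardG /=; apply/eqP; lia | rewrite setU1K].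
Qed.

Section FiniteDifferences.
Variables (R : realType) (d m : nat).
Implicit Types (b : config d) (f g : config d -> R) (F G : {set bedge d m}) (e : bedge d m).

Lemma upd_toE b G e : upd b G (toE e) = (e \in G) || b (toE e).
Proof.
rewrite /upd; congr (_ || _).
apply/existsP/idP => [[e' /andP[h /eqP/toE_inj <-]] //|h].
by exists e; rewrite h eqxx.
Qed.

Lemma has_toE_set1 e y : [exists e' in [set e], toE e' == y] = (toE e == y).
Proof.
apply/existsP/idP => [[e' /andP[/set1P -> ->]] // | h].
by exists e; rewrite set11.
Qed.

Lemma upd_set1U b G e : upd (upd b [set e]) G = upd b (e |: G).
Proof.
apply: funext => y; rewrite /upd has_toE_set1.
have -> : [exists e' in e |: G, toE e' == y]
          = (toE e == y) || [exists e' in G, toE e' == y].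
  apply/existsP/orP => [[e' /andP[/setU1P [->|h] h']]|[h|/existsP[e' /andP[h h']]]].
  - by left.
  - by right; apply/existsP; exists e'; rewrite h h'.
  - by exists e; rewrite setU11 h.
  - by exists e'; rewrite setU1r.
by case: (toE e == y); case: [exists _ in _, _]; case: (b y).
Qed.

Lemma upd_set1_id b e : b (toE e) -> upd b [set e] = b.
Proof.
move=> h; apply: funext => y; rewrite /upd has_toE_set1.
by case: eqP => [<-|]; rewrite ?h.
Qed.

Lemma DGZ (r : R) f F b : DG F (fun b' => r * f b') b = r * DG F f b.
Proof. by rewrite /DG big_distrr; apply: eq_bigr => G _; rewrite mulrCA. Qed.

Lemma DG_sum (I : finType) (P : pred I) (h : I -> config d -> R) F b :
  DG F (fun b' => \sum_(i | P i) h i b') b = \sum_(i | P i) DG F (h i) b.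
Proof.
rewrite /DG exchange_big; apply: eq_bigr => G _; exact: big_distrr.
Qed.

Lemma DGD1 f F e b : e \in F ->
  DG F f b = DG (F :\ e) f (upd b [set e]) - DG (F :\ e) f b.
Proof.
move=> eF; rewrite /DG (bigID (fun G => e \in G)) /=; congr (_ + _).
  rewrite (reindex_onto (fun G => e |: G) (fun G => G :\ e)) /=; last first.
    by move=> G /andP[_ h]; rewrite finset.setD1K.
  apply: eq_big => [G|G _]; last by rewrite upd_set1U finset.setDDl.
  apply/idP/idP => [/andP[/andP[h1 _] /eqP <-]|]; first by rewrite finset.setSD.
  rewrite subsetD1 => /andP[h1 h2].
  by rewrite setU11 setU1K // eqxx finset.subUset finset.sub1set eF h1.
rewrite -sumrN; apply: eq_big => [G|G /andP[_ eG]]; first by rewrite subsetD1.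
by rewrite (cardsD1 e (F :\: G)) inE eF eG /= !finset.setDDl finset.setUC exprS mulN1r mulNr.
Qed.

Lemma DG_open_eq0 f G e b : e \in G -> b (toE e) -> DG G f b = 0.
Proof. by move=> eG be; rewrite (DGD1 _ _ eG) upd_set1_id // subrr. Qed.

Definition mul_bond e g : config d -> R := fun b => (b (toE e))%:R * g b.

Lemma DG_mul_bond_open g F e b : b (toE e) -> DG F (mul_bond e g) b = DG F g b.
Proof. by move=> be; apply: eq_bigr => G _; rewrite /mul_bond upd_toE be orbT mul1r. Qed.

Lemma DG_mul_bond_closed_notin g F e b :
  e \notin F -> b (toE e) = false -> DG F (mul_bond e g) b = 0.
Proof.
move=> eF be; apply: big1 => G GF; rewrite /mul_bond upd_toE be orbF.
have -> : (e \in G) = false by apply: contraNF eF; apply: (fintype.subsetP GF).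
by rewrite mul0r mulr0.
Qed.

Lemma DG_mul_bond_closed_in g F e b :
  e \in F -> b (toE e) = false -> DG F (mul_bond e g) b = DG (F :\ e) g (upd b [set e]).
Proof.
move=> eF be; rewrite (DGD1 _ _ eF).
rewrite (DG_mul_bond_closed_notin _ (negbT (setD11 e F)) be) subr0.
by rewrite DG_mul_bond_open // upd_toE set11.
Qed.

Lemma sum_DG_mul_bond g (A : {set bedge d m}) (k : nat) e (a : config d) :
  (1 <= k)%N -> e \in A ->
  \sum_(F : {set bedge d m} | (F \subset A) && (#|F| == k)) DG F (mul_bond e g) a
  = (a (toE e))%:R * \sum_(F : {set bedge d m} | (F \subset A) && (#|F| == k)) DG F g a
  + ((upd a [set e] (toE e))%:R - (a (toE e))%:R) *
    \sum_(G : {set bedge d m} | (G \subset A) && (#|G| == k.-1)) DG G g (upd a [set e]).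
Proof.
move=> k_gt0 eA; rewrite upd_toE set11 /=.
case ae: (a (toE e)).
  rewrite subrr mul0r addr0 mul1r; apply: eq_bigr => F _; exact: DG_mul_bond_open.
rewrite mul0r add0r subr0 mul1r.
rewrite (bigID (fun F => e \in F)) /= [X in _ + X]big1 ?addr0; last first.
  by move=> F /andP[_ eF]; apply: DG_mul_bond_closed_notin.
rewrite [RHS](bigID (fun G => e \in G)) /= [X in X + _]big1 ?add0r; last first.
  by move=> G /andP[_ eG]; apply: DG_open_eq0 eG _; rewrite upd_toE set11.
rewrite sum_card_set_mem //; apply: eq_bigr => G /andP[_ eG].
by rewrite DG_mul_bond_closed_in ?setU11 // setU1K.
Qed.
End FiniteDifferences.

Theorem lemma3p2 (R : realType) (d m k : nat) (xi : 'rV[R]_d)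
  (v : config d -> pt d -> R) (a : config d) :
  (0 < m)%N -> (1 <= k)%N -> is_vsel m xi v ->
  \sum_(F : {set bedge d m} | (F \subset Ebox d m) && (#|F| == k))
      DG F (Energy m xi) a
  = (box_card d m)%:R^-1 *
      \sum_(e in Ebox d m)
        grad (lxi xi) (toE e) *
        ((a (toE e))%:R *
         \sum_(F : {set bedge d m} | (F \subset Ebox d m) && (#|F| == k))
            DG F (fun b => grad (v b) (toE e)) a)
  + (box_card d m)%:R^-1 *
      \sum_(e in Ebox d m)
        \sum_(e' in Ebox d m)
          grad (lxi xi) (toE e') *
          (((upd a [set e] (toE e'))%:R - (a (toE e'))%:R) *
           \sum_(G : {set bedge d m} | (G \subset Ebox d m) && (#|G| == k.-1))
              DG G (fun b => grad (v b) (toE e')) (upd a [set e])).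
Proof.
move=> _ k_gt0 hv.
have -> : Energy m xi = fun b => (box_card d m)%:R^-1 * \sum_(e in Ebox d m)
    grad (lxi xi) (toE e) * mul_bond e (fun b => grad (v b) (toE e)) b.
  by apply: funext => b; rewrite (Energy_vsel _ hv).
under eq_bigr do rewrite DGZ DG_sum.
under eq_bigr do under eq_bigr do rewrite DGZ.
rewrite -big_distrr exchange_big /=.
(* In the second sum only e' = e survives, since [a^e] and [a] differ only on [e]. *)
under [X in _ = _ + _ * X]eq_bigr => e eE.
  rewrite (bigD1 e eE) /= [X in _ + X]big1 ?addr0; last first.
    by move=> e' /andP[_ ne]; rewrite upd_toE finset.in_set1 (negbTE ne) subrr mul0r mulr0.
  over.
rewrite -mulrDr -big_split /=; congr (_ * _); apply: eq_bigr => e eE.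
by rewrite -big_distrr /= sum_DG_mul_bond // mulrDr.
Qed.
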